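(* Let $\mathcal I$ be a finite set of $N$ followers. For each $i\in\mathcal I$ let $\mathcal X_i=\{x^i\in\mathbb{R}^{m_F}\mid \mathbf 1^Tx^i=b_i,\ G_ix^i\le h_i\}$ (i.e. $A_i=\mathbf 1^T$), with $\mathcal X_i$ nonempty, compact and satisfying Slater's constraint qualification. Let follower $i$ have cost $$J^i(x^i,x^{-i},\pi)=\tfrac12 (x^i)^TPx^i+(x^i)^TQ\sigma(x^{-i})+r_i^Tx^i+(x^i)^TS\pi,\qquad \sigma(x^{-i})=\sum_{j\ne i}x^j,$$ where $P=P^T\succ0$, $Q=Q^T\succeq0$, $P\succ Q$, $r_i\in\mathbb{R}^{m_F}$, and $S$ is a diagonal matrix with $S\succ 0$ common to all followers. Let $G_0(\pi)$ be the game in which each follower $i$ minimizes $J^i$ over $x^i\in\mathcal X_i$ given the others' strategies. Then for every price vector $\pi$ and every $\alpha\in\mathbb{R}$, the vectors $\pi$ and $\bar\pi=\pi+\alpha v$, where $v_k=1/S_{kk}$, yield the same Nash equilibrium of $G_0$.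
   Context: A joint strategy $x^*=\mathrm{col}((x^{i*})_i)$ with $x^{i*}\in\mathcal X_i$ is a Nash equilibrium of $G_0(\pi)$ if for all $i$ and all $x^i\in\mathcal X_i$, $J^i(x^{i*},x^{-i*},\pi)\le J^i(x^i,x^{-i*},\pi)$. Under these hypotheses $G_0(\pi)$ has a unique Nash equilibrium for each $\pi$. *)

From HB Require Import structures.
From mathcomp Require Import all_boot all_order all_algebra.
From mathcomp Require Import all_classical all_reals all_analysis.
Set Implicit Arguments. Unset Strict Implicit. Unset Printing Implicit Defensive.
Import Order.TTheory GRing.Theory Num.Theory.
Import numFieldNormedType.Exports.
Local Open Scope classical_set_scope.
Local Open Scope ring_scope.

Section Defs.
Variable R : realType.

Definition posdef m (M : 'M[R]_m) : Prop :=
  M^T = M /\ forall y : 'cV[R]_m, y != 0 -> 0 < (y^T *m M *m y) 0 0.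
Definition possemidef m (M : 'M[R]_m) : Prop :=
  M^T = M /\ forall y : 'cV[R]_m, 0 <= (y^T *m M *m y) 0 0.

Definition vle p (u w : 'cV[R]_p) : Prop := forall k, u k 0 <= w k 0.
Definition vlt p (u w : 'cV[R]_p) : Prop := forall k, u k 0 < w k 0.

Definition feas m p (b : R) (G : 'M[R]_(p, m)) (h : 'cV[R]_p) : set 'cV[R]_m :=
  [set y | (const_mx 1)^T *m y = b%:M /\ vle (G *m y) h].

Definition slater m p (b : R) (G : 'M[R]_(p, m)) (h : 'cV[R]_p) : Prop :=
  exists y : 'cV[R]_m, (const_mx 1)^T *m y = b%:M /\ vlt (G *m y) h.

Definition sigma_oth N m (x : 'I_N -> 'cV[R]_m) (i : 'I_N) : 'cV[R]_m :=
  \sum_(j < N | j != i) x j.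

Definition Jcost N m (P Q S : 'M[R]_m) (r : 'I_N -> 'cV[R]_m)
  (i : 'I_N) (x : 'I_N -> 'cV[R]_m) (pi : 'cV[R]_m) : R :=
  (2^-1 *: ((x i)^T *m P *m x i) + (x i)^T *m Q *m sigma_oth x i
   + (r i)^T *m x i + (x i)^T *m S *m pi) 0 0.

Definition upd N m (x : 'I_N -> 'cV[R]_m) (i : 'I_N) (y : 'cV[R]_m) :
  'I_N -> 'cV[R]_m := fun j => if j == i then y else x j.

Definition is_NE N m (P Q S : 'M[R]_m) (r : 'I_N -> 'cV[R]_m)
  (X : 'I_N -> set 'cV[R]_m) (pi : 'cV[R]_m) (x : 'I_N -> 'cV[R]_m) : Prop :=
  forall i, X i (x i) /\
    forall y, X i y -> Jcost P Q S r i x pi <= Jcost P Q S r i (upd x i y) pi.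

End Defs.

From HB Require Import structures.
From mathcomp Require Import all_boot all_order all_algebra.
From mathcomp Require Import all_classical all_reals all_analysis.
Set Implicit Arguments. Unset Strict Implicit.
Import Order.TTheory GRing.Theory Num.Theory.
Import numFieldNormedType.Exports.
Local Open Scope classical_set_scope.
Local Open Scope ring_scope.

(* Since S is diagonal with positive diagonal, S v = 1, so shifting the price by
   alpha v changes the pricing term (x^i)^T S pi of follower i by alpha 1^T x^i,
   which equals the constant alpha b_i on the feasible set X_i.  Every follower's
   cost is thus shifted by a constant over its own strategy set, which changes
   neither its best responses nor, therefore, the Nash equilibria. *)

Section DiagonalScaling.
Variables (R : realType) (m : nat).

Lemma posdef_diag_gt0 (M : 'M[R]_m) k : posdef M -> 0 < M k k.
Proof.
case=> _ /(_ (delta_mx k 0)); rewrite trmx_delta -rowE -colE !mxE; apply.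
by apply/eqP => /matrixP/(_ k 0)/eqP; rewrite !mxE !eqxx oner_eq0.
Qed.

Lemma diag_mulmx_col_inv (S : 'M[R]_m) :
  is_diag_mx S -> (forall k, S k k != 0) -> S *m \col_k (S k k)^-1 = const_mx 1.
Proof.
move=> /diag_mxP [d ->] Snz; apply/matrixP => k j.
have := Snz k; rewrite mul_diag_mx !mxE eqxx mulr1n => dk_nz.
by rewrite mulfV.
Qed.

End DiagonalScaling.

Section PriceShift.
Variables (R : realType) (N m : nat) (P Q S : 'M[R]_m) (r : 'I_N -> 'cV[R]_m).
Variables (v : 'cV[R]_m) (alpha : R).
Hypothesis Sv : S *m v = const_mx 1.

Lemma Jcost_price_shift i (x : 'I_N -> 'cV[R]_m) pi b :
  (const_mx 1)^T *m x i = b%:M ->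
  Jcost P Q S r i x (pi + alpha *: v) = Jcost P Q S r i x pi + alpha * b.
Proof.
move=> sum_xi.
have pricing : (x i)^T *m S *m (pi + alpha *: v)
             = (x i)^T *m S *m pi + (alpha * b)%:M.
  rewrite mulmxDr -scalemxAr -[_ *m S *m v]mulmxA Sv.
  rewrite -[_ *m const_mx 1]trmxK trmx_mul trmxK sum_xi.
  by rewrite tr_scalar_mx scale_scalar_mx.
by rewrite /Jcost pricing addrA [LHS]mxE [X in _ + X]mxE eqxx mulr1n.
Qed.

Lemma is_NE_price_shift (X : 'I_N -> set 'cV[R]_m) (b : 'I_N -> R) pi x :
  (forall i, X i `<=` [set y | (const_mx 1)^T *m y = (b i)%:M]) ->
  is_NE P Q S r X (pi + alpha *: v) x <-> is_NE P Q S r X pi x.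
Proof.
move=> Xb.
have shift i z : X i (z i) ->
    Jcost P Q S r i z (pi + alpha *: v) = Jcost P Q S r i z pi + alpha * b i.
  by move=> /Xb; apply: Jcost_price_shift.
have upd_at i y : upd x i y i = y by rewrite /upd eqxx.
split=> NE i; have [Xx best] := NE i; split=> // y Xy;
  have Xu : X i (upd x i y i) by rewrite upd_at.
- by rewrite -(lerD2r (alpha * b i)) -!shift //; apply: best.
- by rewrite !shift // lerD2r; apply: best.
Qed.

End PriceShift.

Theorem corollary1 (R : realType) (N mF : nat) (p : 'I_N -> nat)
  (b : 'I_N -> R) (G : forall i : 'I_N, 'M[R]_(p i, mF))
  (h : forall i : 'I_N, 'cV[R]_(p i))
  (P Q S : 'M[R]_mF) (r : 'I_N -> 'cV[R]_mF) :
  (forall i, feas (b i) (G i) (h i) !=set0) ->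
  (forall i, compact (feas (b i) (G i) (h i))) ->
  (forall i, slater (b i) (G i) (h i)) ->
  posdef P -> possemidef Q -> posdef (P - Q) ->
  is_diag_mx S -> posdef S ->
  forall (pi : 'cV[R]_mF) (alpha : R),
    let v : 'cV[R]_mF := \col_k (S k k)^-1 in
    let pibar := pi + alpha *: v in
    let X := fun i => feas (b i) (G i) (h i) in
    forall x : 'I_N -> 'cV[R]_mF,
      is_NE P Q S r X pi x <-> is_NE P Q S r X pibar x.
Proof.
move=> _ _ _ _ _ _ Sdiag Spos pi alpha v pibar X x.
have Sv : S *m v = const_mx 1.
  by apply: diag_mulmx_col_inv => // k; rewrite gt_eqF ?posdef_diag_gt0.
have Xb i : X i `<=` [set y | (const_mx 1)^T *m y = (b i)%:M] by move=> y [].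
by symmetry; exact: (is_NE_price_shift P Q r alpha Sv pi x Xb).
Qed.
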